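(* Let $\sigma_0,\sigma_\epsilon>0$, $\theta_0,b\in\mathbb{R}$. Let the prior belief be $\Theta\sim\mathrm{Cauchy}(\theta_0,\sigma_0)$ and let the signal be $X=\Theta+b+\epsilon$ with $\epsilon\sim\mathrm{Cauchy}(0,\sigma_\epsilon)$ independent of $\Theta$. Then for every $x\in\mathbb{R}$ the posterior mean $\theta_1=\mathbb{E}[\Theta\mid X=x]$ exists and satisfies $$\theta_1-\theta_0=\omega\,(x-b-\theta_0),\qquad \omega=\frac{\sigma_0}{\sigma_0+\sigma_\epsilon}.$$
   Context: $\mathrm{Cauchy}(\mu,s)$ denotes the distribution with density $t\mapsto\dfrac{1}{\pi s\,[1+((t-\mu)/s)^2]}$. The posterior mean is $\theta_1=\dfrac{\int\theta\,f_\Theta(\theta)\,l_\epsilon(x-b-\theta)\,d\theta}{\int f_\Theta(\theta)\,l_\epsilon(x-b-\theta)\,d\theta}$, with $f_\Theta$ the prior density and $l_\epsilon$ the noise density. *)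

From HB Require Import structures.
From mathcomp Require Import all_boot all_order all_algebra.
From mathcomp Require Import all_classical all_reals all_analysis.
Set Implicit Arguments. Unset Strict Implicit. Unset Printing Implicit Defensive.
Import Order.TTheory GRing.Theory Num.Theory.
Local Open Scope ring_scope.
Local Open Scope classical_set_scope.

Definition cauchy_pdf {R : realType} (mu s : R) (t : R) : R :=
  1 / (pi * s * (1 + ((t - mu) / s) ^+ 2)).

Definition post_weight {R : realType} (fTheta leps : R -> R) (x b : R) (th : R) : R :=
  fTheta th * leps (x - b - th).

Definition posterior_mean {R : realType} (fTheta leps : R -> R) (x b : R) : R :=
  Rintegral (@lebesgue_measure R) setT (fun th => th * post_weight fTheta leps x b th)
  / Rintegral (@lebesgue_measure R) setT (post_weight fTheta leps x b).

From HB Require Import structures.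
From mathcomp Require Import all_boot all_order all_algebra.
From mathcomp Require Import all_classical all_reals all_analysis.
From mathcomp Require Import measurable_realfun ring lra.
Set Implicit Arguments. Unset Strict Implicit. Unset Printing Implicit Defensive.
Import Order.TTheory GRing.Theory Num.Theory.
Import numFieldNormedType.Exports.
Local Open Scope ring_scope.
Local Open Scope classical_set_scope.

(* Up to the factor [s0 se / pi^2], the posterior weight is [1 / (P Q)] with
   [P = s0^2 + (t - th0)^2] and [Q = se^2 + (t - y)^2], [y = x - b].  The
   posterior mean is the point [m = th0 + s0 (y - th0) / (s0 + se)] at which
   [(t - m) / (P Q)] integrates to zero.  Indeed, times
   [N = (y - th0)^2 + (s0 - se)^2] and [s0 + se], this integrand is the
   derivative of
     [(se - s0)/2 (ln P - ln Q) - (y - th0) atan ((t - th0)/s0)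
                                + (y - th0) atan ((t - y)/se)],
   which vanishes at both ends of the line; if [N = 0] it is the derivative of
   [-1 / (2 P)].  Integrability of [(u t + v) / (P Q)] follows from the bound
   [B / P], whose integral is [B pi / s0]. *)

Section line_integrals.
Context {R : realType}.
Notation mu := (@lebesgue_measure R).
Implicit Types (f F g G : R -> R) (u v m : R).

Lemma ge0_continuous_FTC_line f F (l1 l2 : R) :
  (forall x, 0 <= f x) -> continuous f -> (forall x, is_derive x (1 : R) F (f x)) ->
  F x @[x --> +oo] --> l1 -> F x @[x --> -oo] --> l2 ->
  mu.-integrable setT (EFin \o f) /\ Rintegral mu setT f = l1 - l2.
Proof.
move=> f_ge0 cf dF Fl1 Fl2.
have mf : measurable_fun [set: R] f by exact: continuous_measurable_fun.
have cF : continuous F.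
  by move=> x; apply/differentiable_continuous/derivable1_diffP; case: (dF x).
(* The library FTC is stated on [`[a, +oo[]: split the line at 0 and reflect the negative half. *)
have If : (\int[mu]_x (f x)%:E = (l1 - l2)%:E)%E.
  have m_ge0 : measurable [set x : R | 0 <= x] by rewrite -set_itvcy.
  rewrite -(setUv [set x : R | 0 <= x]) ge0_integral_setU//=; last 4 first.
  - exact: measurableC.
  - by apply/measurable_EFinP; rewrite setUv.
  - by move=> x _; rewrite lee_fin.
  - exact/disj_setPCl.
  rewrite -set_itvcy// setCitvr.
  rewrite integral_itv_bndo_bndc; last exact/measurable_EFinP/measurable_funTS.
  rewrite -{2}oppr0 ge0_integration_by_substitutionNy//; last first.
    exact: continuous_subspaceT.
  rewrite (@ge0_continuous_FTC2y R f F 0 l1) //; last 3 first.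
  - exact: continuous_subspaceT.
  - exact/cvg_at_right_filter/cF.
  - by move=> x _; rewrite derive1E; case: (dF x) => _ ->.
  rewrite (@ge0_continuous_FTC2y R (f \o -%R) (fun x => - F (- x)) 0 (- l2)) //;
    last 5 first.
  - by move=> x _; rewrite /comp.
  - apply: continuous_subspaceT => x.
    by apply: (@continuous_comp _ _ _ -%R f); [exact: continuousN|exact: cf].
  - by apply: cvgN; rewrite -cvgNy_compNP.
  - apply/cvg_at_right_filter/continuousN.
    by apply: (@continuous_comp _ _ _ -%R F); [exact: continuousN|exact: cF].
  - move=> x _; rewrite derive1E.
    have /is_deriveN[_ ->] := is_derive1_comp (dF (- x)) (is_deriveNid x 1).
    by rewrite mulrN1 opprK.
  by rewrite oppr0 -!EFinD; congr EFin; ring.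
split; last by rewrite /Rintegral If.
apply/integrableP; split; first exact/measurable_EFinP.
under eq_integral => x _ do rewrite /= ger0_norm//.
by rewrite If ltry.
Qed.

Lemma continuous_FTC_line f F g G (l1 l2 m1 m2 : R) :
  (forall x, `|f x| <= g x) -> continuous f -> continuous g ->
  (forall x, is_derive x (1 : R) F (f x)) ->
  (forall x, is_derive x (1 : R) G (g x)) ->
  F x @[x --> +oo] --> l1 -> F x @[x --> -oo] --> l2 ->
  G x @[x --> +oo] --> m1 -> G x @[x --> -oo] --> m2 ->
  mu.-integrable setT (EFin \o f) /\ Rintegral mu setT f = l1 - l2.
Proof.
move=> fg cf cg dF dG Fl1 Fl2 Gm1 Gm2.
have g_ge0 x : 0 <= g x by exact: le_trans (fg x).
have fg_ge0 x : 0 <= f x + g x.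
  by have := fg x; rewrite ler_norml -subr_ge0 opprK addrC => /andP[].
have [intg Ig] := ge0_continuous_FTC_line g_ge0 cg dG Gm1 Gm2.
have [intfg Ifg] := @ge0_continuous_FTC_line (f \+ g) (F \+ G) (l1 + m1) (l2 + m2)
  fg_ge0 (fun x => continuousD (cf x) (cg x)) (fun x => is_deriveD (dF x) (dG x))
  (cvgD Fl1 Gm1) (cvgD Fl2 Gm2).
have intf : mu.-integrable setT (EFin \o f).
  apply: eq_integrable (integrableB measurableT intfg intg) => // x _ /=.
  by rewrite -EFinB addrK.
split=> //.
have -> : Rintegral mu setT f = Rintegral mu setT ((f \+ g) \- g).
  by apply: eq_Rintegral => x _ /=; rewrite addrK.
by rewrite RintegralB // Ifg Ig; ring.
Qed.

Lemma Rintegral_ge_itv f u v m : u < v -> 0 <= m ->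
  (forall t, 0 <= f t) -> mu.-integrable setT (EFin \o f) ->
  (forall t, u <= t <= v -> m <= f t) -> m * (v - u) <= Rintegral mu setT f.
Proof.
move=> uv m_ge0 f_ge0 intf fm.
have mf : measurable_fun setT f by apply/measurable_EFinP; case/integrableP: intf.
rewrite -lee_fin /Rintegral fineK; last exact: integrable_fin_num.
apply: (@le_trans _ _ (\int[mu]_(x in `[u, v]) (f x)%:E)%E); last first.
  apply: ge0_subset_integral => //; first exact/measurable_EFinP.
  by move=> x _; rewrite lee_fin.
apply: (@le_trans _ _ (\int[mu]_(x in `[u, v]) (cst m%:E x))%E).
  by rewrite integral_cst //= lebesgue_measure_itv /= lte_fin uv -EFinD.
by apply: ge0_le_integral => //; apply/measurable_EFinP; exact: measurable_funTS.
Qed.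

End line_integrals.

Section cauchy_den.
Context {R : realType}.
Notation mu := (@lebesgue_measure R).
Implicit Types a c e y s t M : R.

Definition cauchy_den s c t := s ^+ 2 + (t - c) ^+ 2.

Lemma cauchy_den_gt0 s c t : 0 < s -> 0 < cauchy_den s c t.
Proof. by move=> s_gt0; rewrite /cauchy_den ltr_pwDl ?sqr_ge0 ?exprn_gt0. Qed.

Lemma cauchy_denN s c t : cauchy_den s c (- t) = cauchy_den s (- c) t.
Proof. by rewrite /cauchy_den opprK -(sqrrN (t + c)) opprD. Qed.

Lemma is_derive_cauchy_den s c t :
  is_derive t (1 : R) (cauchy_den s c) (2 * (t - c)).
Proof. by apply: is_derive_eq; rewrite -![_ *: _]/(_ * _); ring. Qed.

Lemma continuous_cauchy_den s c : continuous (cauchy_den s c).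
Proof.
move=> t; apply/differentiable_continuous/derivable1_diffP.
by case: (is_derive_cauchy_den s c t).
Qed.

Lemma is_derive_ln_cauchy_den s c t : 0 < s ->
  is_derive t (1 : R) (fun u => ln (cauchy_den s c u)) (2 * (t - c) / cauchy_den s c t).
Proof.
move=> s_gt0; rewrite mulrC.
exact: is_derive1_comp (is_derive1_ln (cauchy_den_gt0 c t s_gt0)) (is_derive_cauchy_den s c t).
Qed.

Lemma is_derive_atan_cauchy_den s c t : 0 < s ->
  is_derive t (1 : R) (fun u => atan ((u - c) / s)) (s / cauchy_den s c t).
Proof.
move=> s_gt0.
have dlin : is_derive t (1 : R) (fun u => (u - c) / s) s^-1.
  by apply: is_derive_eq; rewrite -![_ *: _]/(_ * _); ring.
have := @is_derive1_comp R atan (fun u => (u - c) / s) t _ _ (is_derive1_atan _) dlin.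
have s_neq0 : s != 0 by rewrite gt_eqF.
have P_neq0 := gt_eqF (cauchy_den_gt0 c t s_gt0).
move: P_neq0; rewrite /cauchy_den => P_neq0 dF; apply: is_derive_eq.
by field; rewrite P_neq0 s_neq0.
Qed.

Lemma cvgy_cauchy_den s c : cauchy_den s c t @[t --> +oo] --> +oo.
Proof.
apply/cvgryPge => A; exists (c + `|A| + 1); split; first exact: num_real.
move=> t ct; rewrite /cauchy_den.
have := sqr_ge0 s; have := ler_norm A; have := normr_ge0 A; nra.
Qed.

Lemma cvgy_div_cauchy_den s c M : 0 < s -> M / cauchy_den s c t @[t --> +oo] --> 0.
Proof.
move=> s_gt0; rewrite -(mulr0 M); apply: cvgM; first exact: cvg_cst.
apply/gtr0_cvgV0; last exact: cvgy_cauchy_den.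
by near=> t; exact: cauchy_den_gt0.
Unshelve. all: by end_near.
Qed.

Lemma cvgNy_div_cauchy_den s c M : 0 < s -> M / cauchy_den s c t @[t --> -oo] --> (0 : R).
Proof.
move=> s_gt0; rewrite cvgNy_compNP /comp.
under eq_fun do rewrite cauchy_denN.
exact: cvgy_div_cauchy_den.
Qed.

Lemma cvgy_lin_div_cauchy_den s c : 0 < s -> (t - c) / cauchy_den s c t @[t --> +oo] --> 0.
Proof.
move=> s_gt0.
have -> : (fun t => (t - c) / cauchy_den s c t) = (fun t => (cauchy_den s c t / (t - c))^-1).
  by apply/funext => t; rewrite invf_div.
apply/(@gtr0_cvgV0 _ _ _ _ (fun t => cauchy_den s c t / (t - c))).
  near=> t; rewrite divr_gt0 ?cauchy_den_gt0 // subr_gt0; near: t.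
  by exists c; split; [exact: num_real | move=> t].
apply/cvgryPge => A; exists (c + `|A| + 1); split; first exact: num_real.
move=> t ct /=; rewrite ler_pdivlMr ?subr_gt0; last first.
  by apply: lt_trans ct; rewrite -addrA ltrDl ltr_pwDr // normr_ge0.
rewrite /cauchy_den; have := sqr_ge0 s; have := ler_norm A; have := normr_ge0 A; nra.
Unshelve. all: by end_near.
Qed.

Lemma cvgy_cauchy_den_ratio a c e y : 0 < e ->
  cauchy_den a c t / cauchy_den e y t @[t --> +oo] --> (1 : R).
Proof.
move=> e_gt0.
have ratioE t : cauchy_den a c t / cauchy_den e y t =
    1 + 2 * (y - c) * ((t - y) / cauchy_den e y t)
      + (a ^+ 2 - e ^+ 2 + (y - c) ^+ 2) / cauchy_den e y t.
  have Q_neq0 := gt_eqF (cauchy_den_gt0 y t e_gt0).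
  by move: Q_neq0; rewrite /cauchy_den => Q_neq0; field; rewrite Q_neq0.
rewrite (_ : 1 = 1 + 2 * (y - c) * 0 + 0); last by rewrite mulr0 !addr0.
under eq_fun do rewrite ratioE.
apply: cvgD; last exact: cvgy_div_cauchy_den.
apply: cvgD; first exact: cvg_cst.
by apply: cvgM; [exact: cvg_cst | exact: cvgy_lin_div_cauchy_den].
Qed.

Lemma cvgy_ln_cauchy_den_ratio a c e y : 0 < a -> 0 < e ->
  ln (cauchy_den a c t) - ln (cauchy_den e y t) @[t --> +oo] --> (0 : R).
Proof.
move=> a_gt0 e_gt0.
under eq_fun do rewrite -ln_div ?posrE ?cauchy_den_gt0//.
rewrite -ln1; apply: cvg_comp (cvgy_cauchy_den_ratio a c y e_gt0) _.
exact: continuous_ln.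
Qed.

Lemma cvgNy_ln_cauchy_den_ratio a c e y : 0 < a -> 0 < e ->
  ln (cauchy_den a c t) - ln (cauchy_den e y t) @[t --> -oo] --> (0 : R).
Proof.
move=> a_gt0 e_gt0; rewrite cvgNy_compNP /comp.
under eq_fun do rewrite !cauchy_denN.
exact: cvgy_ln_cauchy_den_ratio.
Qed.

Lemma cvgy_atan_shift s c : 0 < s -> atan ((t - c) / s) @[t --> +oo] --> pi / 2.
Proof.
move=> s_gt0; apply: (@cvg_comp _ _ _ (fun t => (t - c) / s) atan _ _ _ _ (@cvgy_atan R)).
apply/cvgryPge => A; exists (A * s + c); split; first exact: num_real.
by move=> t At; rewrite ler_pdivlMr // lerBrDr ltW.
Qed.

Lemma cvgNy_atan_shift s c : 0 < s -> atan ((t - c) / s) @[t --> -oo] --> - (pi / 2).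
Proof.
move=> s_gt0; rewrite cvgNy_compNP /comp.
have -> : (fun t => atan ((- t - c) / s)) = (fun t => - atan ((t - - c) / s)).
  by apply/funext => t; rewrite -atanN -mulNr; congr (atan (_ / _)); ring.
by apply: cvgN; exact: cvgy_atan_shift.
Qed.

Lemma continuous_div_cauchy_den s c M : 0 < s -> continuous (fun t => M / cauchy_den s c t).
Proof.
move=> s_gt0 t.
apply: (@continuousM _ _ (cst M) (fun t => (cauchy_den s c t)^-1)); first exact: cst_continuous.
apply: continuousV; first by rewrite gt_eqF // cauchy_den_gt0.
exact: continuous_cauchy_den.
Qed.

Lemma is_derive_scaled_atan s c M t : 0 < s ->
  is_derive t (1 : R) (fun u => M / s * atan ((u - c) / s)) (M / cauchy_den s c t).
Proof.
move=> s_gt0; have := is_derive_atan_cauchy_den c t s_gt0.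
have s_neq0 : s != 0 by rewrite gt_eqF.
have P_neq0 := gt_eqF (cauchy_den_gt0 c t s_gt0).
move=> datan; apply: is_derive_eq; rewrite -![_ *: _]/(_ * _).
by field; rewrite P_neq0 s_neq0.
Qed.

Lemma integrable_div_cauchy_den s c M : 0 < s -> 0 <= M ->
  mu.-integrable setT (EFin \o (fun t => M / cauchy_den s c t)).
Proof.
move=> s_gt0 M_ge0.
exact: (ge0_continuous_FTC_line (fun t => divr_ge0 M_ge0 (ltW (cauchy_den_gt0 c t s_gt0)))
  (continuous_div_cauchy_den s_gt0) (fun t => is_derive_scaled_atan c M t s_gt0)
  (cvgM (cvg_cst _) (cvgy_atan_shift c s_gt0)) (cvgM (cvg_cst _) (cvgNy_atan_shift c s_gt0))).1.
Qed.

End cauchy_den.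

Section cauchy_rat.
Context {R : realType}.
Notation mu := (@lebesgue_measure R).
Implicit Types a c e y s t u v k : R.

Definition cauchy_rat a c e y u v t :=
  (u * t + v) / (cauchy_den a c t * cauchy_den e y t).

Lemma cauchy_ratZ a c e y u v k t :
  cauchy_rat a c e y (k * u) (k * v) t = k * cauchy_rat a c e y u v t.
Proof. by rewrite /cauchy_rat; ring. Qed.

Lemma continuous_cauchy_rat a c e y u v : 0 < a -> 0 < e ->
  continuous (cauchy_rat a c e y u v).
Proof.
move=> a_gt0 e_gt0 t.
apply: (@continuousM _ _ (fun t => u * t + v)
  (fun t => (cauchy_den a c t * cauchy_den e y t)^-1)).
  by apply: cvgD; [apply: cvgM; [exact: cvg_cst | exact: cvg_id] | exact: cvg_cst].
apply: continuousV; first by rewrite mulf_neq0 // gt_eqF // cauchy_den_gt0.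
by apply: (@continuousM _ _ (cauchy_den a c) (cauchy_den e y)); exact: continuous_cauchy_den.
Qed.

(* [2 e |t - y| <= Q] and [e^2 <= Q] for [Q = e^2 + (t - y)^2] absorb the numerator into [Q]. *)
Lemma cauchy_rat_dominated a c e y u v : 0 < a -> 0 < e ->
  exists2 B, 0 <= B & forall t, `|cauchy_rat a c e y u v t| <= B / cauchy_den a c t.
Proof.
move=> a_gt0 e_gt0.
have e2_gt0 : 0 < e ^+ 2 by rewrite exprn_gt0.
set B := `|u| / (2 * e) + `|u * y + v| / e ^+ 2.
exists B; first by rewrite addr_ge0 // divr_ge0 // ?mulr_ge0 // ltW.
move=> t.
have P_gt0 := cauchy_den_gt0 c t a_gt0; have Q_gt0 := cauchy_den_gt0 y t e_gt0.
set P := cauchy_den a c t in P_gt0 *; set Q := cauchy_den e y t in Q_gt0 *.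
have lin_le : 2 * e * `|t - y| <= Q.
  rewrite /Q /cauchy_den -(real_normK (num_real (t - y))).
  have := sqr_ge0 (e - `|t - y|); lra.
have cst_le : e ^+ 2 <= Q by rewrite /Q /cauchy_den lerDl sqr_ge0.
have num_le : `|u * t + v| <= B * Q.
  rewrite (_ : u * t + v = u * (t - y) + (u * y + v)); last by ring.
  rewrite (le_trans (ler_normD _ _)) // normrM /B mulrDl.
  apply: lerD.
    rewrite (_ : `|u| * `|t - y| = `|u| / (2 * e) * (2 * e * `|t - y|)); last first.
      by field; rewrite gt_eqF.
    by apply: ler_wpM2l lin_le; rewrite divr_ge0 // mulr_ge0 // ltW.
  have normK : `|u * y + v| = `|u * y + v| / e ^+ 2 * e ^+ 2 by rewrite divfK ?gt_eqF.
  rewrite {1}normK.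
  by apply: ler_wpM2l cst_le; rewrite divr_ge0 // ltW.
rewrite /cauchy_rat -/P -/Q normrM normfV (gtr0_norm (mulr_gt0 P_gt0 Q_gt0)).
rewrite ler_pdivrMr ?mulr_gt0 //.
by apply: (le_trans num_le); rewrite mulrA divfK ?gt_eqF.
Qed.

Lemma integrable_cauchy_rat a c e y u v : 0 < a -> 0 < e ->
  mu.-integrable setT (EFin \o cauchy_rat a c e y u v).
Proof.
move=> a_gt0 e_gt0.
have [B B_ge0 ratB] := cauchy_rat_dominated c y u v a_gt0 e_gt0.
have mrat : measurable_fun setT (cauchy_rat a c e y u v).
  exact: continuous_measurable_fun (continuous_cauchy_rat a_gt0 e_gt0).
apply: (le_integrable measurableT _ _ (integrable_div_cauchy_den c a_gt0 B_ge0)).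
  exact/measurable_EFinP.
move=> t _ /=; rewrite lee_fin (ger0_norm (divr_ge0 B_ge0 _)) //.
exact: ltW (cauchy_den_gt0 c t a_gt0).
Qed.

Lemma Rintegral_cauchy_rat_primitive a c e y u v F (l1 l2 : R) : 0 < a -> 0 < e ->
  (forall t, is_derive t (1 : R) F (cauchy_rat a c e y u v t)) ->
  F t @[t --> +oo] --> l1 -> F t @[t --> -oo] --> l2 ->
  Rintegral mu setT (cauchy_rat a c e y u v) = l1 - l2.
Proof.
move=> a_gt0 e_gt0 dF Fl1 Fl2.
have [B _ ratB] := cauchy_rat_dominated c y u v a_gt0 e_gt0.
exact: (continuous_FTC_line ratB (continuous_cauchy_rat a_gt0 e_gt0)
  (continuous_div_cauchy_den a_gt0) dF (fun t => is_derive_scaled_atan c B t a_gt0)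
  Fl1 Fl2 (cvgM (cvg_cst _) (cvgy_atan_shift c a_gt0))
  (cvgM (cvg_cst _) (cvgNy_atan_shift c a_gt0))).2.
Qed.

Definition cauchy_center a c e y := c + a * (y - c) / (a + e).

Definition cauchy_rat_primitive a c e y t :=
  (e - a) / 2 * (ln (cauchy_den a c t) - ln (cauchy_den e y t))
  - (y - c) * atan ((t - c) / a) + (y - c) * atan ((t - y) / e).

Lemma is_derive_cauchy_rat_primitive a c e y t : 0 < a -> 0 < e ->
  is_derive t (1 : R) (cauchy_rat_primitive a c e y)
    (((y - c) ^+ 2 + (a - e) ^+ 2) * (a + e) *
       cauchy_rat a c e y 1 (- cauchy_center a c e y) t).
Proof.
move=> a_gt0 e_gt0.
have := is_derive_ln_cauchy_den c t a_gt0; have := is_derive_ln_cauchy_den y t e_gt0.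
have := is_derive_atan_cauchy_den c t a_gt0; have := is_derive_atan_cauchy_den y t e_gt0.
move=> d1 d2 d3 d4; apply: is_derive_eq.
have ae_neq0 : a + e != 0 by rewrite gt_eqF ?addr_gt0.
have P_neq0 := gt_eqF (cauchy_den_gt0 c t a_gt0).
have Q_neq0 := gt_eqF (cauchy_den_gt0 y t e_gt0).
move: P_neq0 Q_neq0; rewrite /cauchy_rat /cauchy_center /cauchy_den => P_neq0 Q_neq0.
by rewrite -![_ *: _]/(_ * _); field; rewrite ae_neq0 P_neq0 Q_neq0.
Qed.

Lemma cvgy_cauchy_rat_primitive a c e y : 0 < a -> 0 < e ->
  cauchy_rat_primitive a c e y t @[t --> +oo] --> 0.
Proof.
move=> a_gt0 e_gt0.
rewrite (_ : 0 = (e - a) / 2 * 0 - (y - c) * (pi / 2) + (y - c) * (pi / 2)); last by ring.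
apply: cvgD; first apply: cvgB; apply: cvgM; try exact: cvg_cst.
- exact: cvgy_ln_cauchy_den_ratio.
- exact: cvgy_atan_shift.
- exact: cvgy_atan_shift.
Qed.

Lemma cvgNy_cauchy_rat_primitive a c e y : 0 < a -> 0 < e ->
  cauchy_rat_primitive a c e y t @[t --> -oo] --> 0.
Proof.
move=> a_gt0 e_gt0.
rewrite (_ : 0 = (e - a) / 2 * 0 - (y - c) * - (pi / 2) + (y - c) * - (pi / 2)); last by ring.
apply: cvgD; first apply: cvgB; apply: cvgM; try exact: cvg_cst.
- exact: cvgNy_ln_cauchy_den_ratio.
- exact: cvgNy_atan_shift.
- exact: cvgNy_atan_shift.
Qed.

Lemma is_derive_inv_cauchy_den a c t : 0 < a ->
  is_derive t (1 : R) (fun u => - 2^-1 / cauchy_den a c u) (cauchy_rat a c a c 1 (- c) t).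
Proof.
move=> a_gt0.
have P_neq0 : cauchy_den a c t != 0 by rewrite gt_eqF // cauchy_den_gt0.
have := is_deriveZ (- 2^-1) (is_deriveV P_neq0 (is_derive_cauchy_den a c t)).
move: P_neq0; rewrite /cauchy_rat /cauchy_den => P_neq0 dV.
by apply: is_derive_eq; rewrite -![_ *: _]/(_ * _); field; rewrite P_neq0.
Qed.

Lemma Rintegral_cauchy_rat_center a c e y : 0 < a -> 0 < e ->
  Rintegral mu setT (cauchy_rat a c e y 1 (- cauchy_center a c e y)) = 0.
Proof.
move=> a_gt0 e_gt0.
set N := (y - c) ^+ 2 + (a - e) ^+ 2.
have [N0|N_neq0] := eqVneq N 0.
  have /andP[] : ((y - c) ^+ 2 == 0) && ((a - e) ^+ 2 == 0).
    by rewrite -paddr_eq0 ?sqr_ge0 // -/N N0.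
  rewrite !sqrf_eq0 !subr_eq0 => /eqP -> /eqP <-.
  rewrite /cauchy_center subrr mulr0 mul0r addr0.
  rewrite (Rintegral_cauchy_rat_primitive a_gt0 a_gt0
    (fun t => is_derive_inv_cauchy_den c t a_gt0)
    (cvgy_div_cauchy_den c _ a_gt0) (cvgNy_div_cauchy_den c _ a_gt0)).
  by rewrite subrr.
set k := N * (a + e).
have k_neq0 : k != 0 by rewrite mulf_neq0 // gt_eqF ?addr_gt0.
set m := cauchy_center a c e y.
have dF t : is_derive t (1 : R) (cauchy_rat_primitive a c e y) (cauchy_rat a c e y (k * 1) (k * - m) t).
  by rewrite cauchy_ratZ; exact: is_derive_cauchy_rat_primitive.
have := Rintegral_cauchy_rat_primitive a_gt0 e_gt0 dF
  (cvgy_cauchy_rat_primitive c y a_gt0 e_gt0) (cvgNy_cauchy_rat_primitive c y a_gt0 e_gt0).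
have -> : cauchy_rat a c e y (k * 1) (k * - m) = fun t => k * cauchy_rat a c e y 1 (- m) t.
  by apply/funext => t; exact: cauchy_ratZ.
rewrite RintegralZl //; last exact: integrable_cauchy_rat.
by rewrite subrr => /eqP; rewrite mulf_eq0 (negbTE k_neq0) => /eqP.
Qed.

Lemma Rintegral_cauchy_rat_gt0 a c e y : 0 < a -> 0 < e ->
  0 < Rintegral mu setT (cauchy_rat a c e y 0 1).
Proof.
move=> a_gt0 e_gt0.
set D := (a ^+ 2 + 1) * (e ^+ 2 + (`|y - c| + 1) ^+ 2).
have D_gt0 : 0 < D by rewrite mulr_gt0 // ltr_pwDr ?exprn_gt0 ?sqr_ge0 ?ltr01.
set m := D^-1.
have m_gt0 : 0 < m by rewrite invr_gt0.
have rat_ge0 t : 0 <= cauchy_rat a c e y 0 1 t.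
  by rewrite /cauchy_rat mul0r add0r div1r invr_ge0 ltW // mulr_gt0 // cauchy_den_gt0.
have c_lt : c < c + 1 by rewrite ltrDl.
apply: lt_le_trans (Rintegral_ge_itv c_lt (ltW m_gt0) rat_ge0
  (integrable_cauchy_rat c y 0 1 a_gt0 e_gt0) _).
  by rewrite addrAC subrr add0r mulr1.
move=> t /andP[ct tc1].
have PQ_gt0 : 0 < cauchy_den a c t * cauchy_den e y t by rewrite mulr_gt0 ?cauchy_den_gt0.
rewrite /cauchy_rat mul0r add0r div1r /m lef_pV2 ?posrE //.
have Pc : cauchy_den a c t <= a ^+ 2 + 1 by rewrite /cauchy_den lerD2l; nra.
have Qc : cauchy_den e y t <= e ^+ 2 + (`|y - c| + 1) ^+ 2.
  rewrite /cauchy_den lerD2l -(real_normK (num_real (t - y))).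
  have : `|t - y| <= `|y - c| + 1.
    rewrite (_ : t - y = (t - c) - (y - c)); last by ring.
    by rewrite (le_trans (ler_normB _ _)) // addrC lerD2l ger0_norm; lra.
  have := normr_ge0 (t - y); nra.
by apply: ler_pM => //; exact: ltW (cauchy_den_gt0 _ _ _).
Qed.

Lemma Rintegral_cauchy_rat_first_moment a c e y : 0 < a -> 0 < e ->
  Rintegral mu setT (cauchy_rat a c e y 1 0) =
    cauchy_center a c e y * Rintegral mu setT (cauchy_rat a c e y 0 1).
Proof.
move=> a_gt0 e_gt0; set m := cauchy_center a c e y.
have -> : cauchy_rat a c e y 1 0 =
    (fun t => m * cauchy_rat a c e y 0 1 t) \+ cauchy_rat a c e y 1 (- m).
  by apply/funext => t; rewrite /cauchy_rat /=; ring.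
rewrite RintegralD //; last 2 first.
- exact: integrableZl (integrable_cauchy_rat _ _ _ _ a_gt0 e_gt0).
- exact: integrable_cauchy_rat.
by rewrite RintegralZl ?Rintegral_cauchy_rat_center ?addr0 //; exact: integrable_cauchy_rat.
Qed.

Lemma cauchy_pdfE c s t : 0 < s ->
  cauchy_pdf c s t = s / (pi * cauchy_den s c t).
Proof.
move=> s_gt0.
have s_neq0 : s != 0 by rewrite gt_eqF.
have pi_neq0 : pi != 0 :> R by rewrite gt_eqF // pi_gt0.
have P_neq0 : cauchy_den s c t != 0 by rewrite gt_eqF // cauchy_den_gt0.
move: P_neq0 pi_neq0; rewrite /cauchy_pdf /cauchy_den; move: (pi : R) => p P_neq0 p_neq0.
by field; rewrite s_neq0 p_neq0 P_neq0.
Qed.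

Lemma post_weight_cauchyE (s0 se th0 x b th : R) : 0 < s0 -> 0 < se ->
  post_weight (cauchy_pdf th0 s0) (cauchy_pdf 0 se) x b th =
    s0 * se / pi ^+ 2 * cauchy_rat s0 th0 se (x - b) 0 1 th.
Proof.
move=> s0_gt0 se_gt0.
rewrite /post_weight !cauchy_pdfE //.
have -> : cauchy_den se 0 (x - b - th) = cauchy_den se (x - b) th.
  by rewrite /cauchy_den; congr (_ + _); rewrite subr0 -sqrrN opprB.
have P_neq0 : cauchy_den s0 th0 th != 0 by rewrite gt_eqF // cauchy_den_gt0.
have Q_neq0 : cauchy_den se (x - b) th != 0 by rewrite gt_eqF // cauchy_den_gt0.
have pi_neq0 : pi != 0 :> R by rewrite gt_eqF // pi_gt0.
rewrite /cauchy_rat mul0r add0r; move: (pi : R) pi_neq0 => p p_neq0.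
by field; rewrite p_neq0 P_neq0 Q_neq0.
Qed.

End cauchy_rat.

Unset Implicit Arguments.
Theorem mainTheorem3 (R : realType) (s0 se th0 b : R) :
  0 < s0 -> 0 < se ->
  forall x : R,
    let w := post_weight (cauchy_pdf th0 s0) (cauchy_pdf 0 se) x b in
    (@lebesgue_measure R).-integrable setT (fun th => (w th)%:E) /\
    (@lebesgue_measure R).-integrable setT (fun th => (th * w th)%:E) /\
    0 < Rintegral (@lebesgue_measure R) setT w /\
    posterior_mean (cauchy_pdf th0 s0) (cauchy_pdf 0 se) x b - th0
      = s0 / (s0 + se) * (x - b - th0).
Proof.
move=> s0_gt0 se_gt0 x w.
set k := s0 * se / pi ^+ 2.
have k_gt0 : 0 < k by rewrite divr_gt0 ?mulr_gt0 ?exprn_gt0 ?pi_gt0.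
have wE : w = fun th => k * cauchy_rat s0 th0 se (x - b) 0 1 th.
  by apply/funext => th; exact: post_weight_cauchyE.
have thwE th : th * w th = k * cauchy_rat s0 th0 se (x - b) 1 0 th.
  by rewrite wE /cauchy_rat; ring.
clearbody k.
have int01 := integrable_cauchy_rat th0 (x - b) 0 1 s0_gt0 se_gt0.
have int10 := integrable_cauchy_rat th0 (x - b) 1 0 s0_gt0 se_gt0.
have Iw : Rintegral (@lebesgue_measure R) setT w =
    k * Rintegral (@lebesgue_measure R) setT (cauchy_rat s0 th0 se (x - b) 0 1).
  by rewrite wE RintegralZl.
have Ithw : Rintegral (@lebesgue_measure R) setT (fun th => th * w th) =
    k * Rintegral (@lebesgue_measure R) setT (cauchy_rat s0 th0 se (x - b) 1 0).
  by rewrite -RintegralZl //; apply: eq_Rintegral => th _; exact: thwE.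
split; first by rewrite wE; apply: eq_integrable (integrableZl measurableT k int01).
split.
  by apply: eq_integrable (integrableZl measurableT k int10) => // th _; rewrite /= thwE.
rewrite /posterior_mean -/w Ithw Iw Rintegral_cauchy_rat_first_moment //.
have Z_gt0 := Rintegral_cauchy_rat_gt0 th0 (x - b) s0_gt0 se_gt0.
split; first exact: mulr_gt0.
rewrite /cauchy_center; field.
by rewrite !gt_eqF ?addr_gt0.
Qed.
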